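(* For any $\vartheta,\varphi\in[0,2\pi]$ and $p,q\in[0,1]$, $$\sqrt{1-pq\cos(\vartheta+\varphi)}\le\sqrt{1-p\cos\vartheta}+\sqrt{1-q\cos\varphi},$$ $$\sqrt{1-pq\cos(\vartheta-\varphi)}\ge\sqrt{1-p\cos\vartheta}-\sqrt{1-q\cos\varphi}.$$ *)

From Stdlib Require Import Reals.

From Stdlib Require Import Reals Lra Psatz.
Open Scope R_scope.

(* With x = sqrt (1 - p cos theta) and y = sqrt (1 - q cos phi) one has
   1 - p q cos (theta +- phi) = x^2 + y^2 - x^2 y^2 -+ p q sin theta sin phi,
   while (p sin theta)^2 <= 1 - p^2 cos^2 theta = x^2 (2 - x^2), and likewise
   for q.  Since (2 - x^2) (2 - y^2) <= (2 - x y)^2 (AM-GM), this gives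
   |p q sin theta sin phi| <= 2 x y - x^2 y^2, which squeezes
   1 - p q cos (theta +- phi) between (x - y)^2 and (x + y)^2. *)

Lemma one_sub_scaled_cos_ge0 (p t : R) : -1 <= p <= 1 -> 0 <= 1 - p * cos t.
Proof. intros Hp; pose proof (COS_bound t); nra. Qed.

Lemma scaled_sin_sqr_le (p t : R) : -1 <= p <= 1 ->
  (p * sin t) ^ 2 <= (1 - p * cos t) * (1 + p * cos t).
Proof.
  intros Hp.
  pose proof (sin2_cos2 t) as Hsc; unfold Rsqr in Hsc.
  pose proof (COS_bound t).
  nra.
Qed.

Lemma abs_mul_le_of_sqr_le (a b x y : R) : 0 <= x -> 0 <= y ->
  a ^ 2 <= x ^ 2 * (2 - x ^ 2) -> b ^ 2 <= y ^ 2 * (2 - y ^ 2) ->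
  Rabs (a * b) <= x * y * (2 - x * y).
Proof.
  intros Hx Hy Ha Hb.
  assert (Hamgm : (2 - x ^ 2) * (2 - y ^ 2) <= (2 - x * y) ^ 2)
    by (pose proof (pow2_ge_0 (x - y)); nra).
  assert (Hxy : x * y <= 2).
  { destruct (Rle_lt_dec (x * y) 2) as [Hle | Hgt]; [exact Hle | exfalso].
    assert (x ^ 2 <= 2) by nra.
    assert (y ^ 2 <= 2) by nra.
    nra. }
  assert (Hab : (a * b) ^ 2 <= (x * y * (2 - x * y)) ^ 2).
  { apply Rle_trans with ((x ^ 2 * (2 - x ^ 2)) * (y ^ 2 * (2 - y ^ 2))).
    - rewrite Rpow_mult_distr.
      apply Rmult_le_compat; try apply pow2_ge_0; assumption.
    - replace ((x * y * (2 - x * y)) ^ 2)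
        with ((x * y) ^ 2 * (2 - x * y) ^ 2) by ring.
      replace (x ^ 2 * (2 - x ^ 2) * (y ^ 2 * (2 - y ^ 2)))
        with ((x * y) ^ 2 * ((2 - x ^ 2) * (2 - y ^ 2))) by ring.
      apply Rmult_le_compat_l; [apply pow2_ge_0 | exact Hamgm]. }
  assert (Hbound : 0 <= x * y * (2 - x * y))
    by (apply Rmult_le_pos; [apply Rmult_le_pos | lra]; assumption).
  rewrite <- (Rabs_pos_eq _ Hbound).
  apply Rsqr_le_abs_0; rewrite !Rsqr_pow2; exact Hab.
Qed.

Lemma sqrt_between_sub_add (x y k : R) : 0 <= x -> 0 <= y ->
  Rabs k <= x * y * (2 - x * y) ->
  x - y <= sqrt (x ^ 2 + y ^ 2 - x ^ 2 * y ^ 2 + k) <= x + y.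
Proof.
  intros Hx Hy Hk.
  pose proof (Rle_abs k); pose proof (Rle_abs (- k)); rewrite Rabs_Ropp in *.
  split.
  - destruct (Rle_dec x y) as [Hle | Hgt].
    + pose proof (sqrt_pos (x ^ 2 + y ^ 2 - x ^ 2 * y ^ 2 + k)); lra.
    + rewrite <- (sqrt_pow2 (x - y)) by lra.
      apply sqrt_le_1_alt; nra.
  - rewrite <- (sqrt_pow2 (x + y)) by lra.
    apply sqrt_le_1_alt; nra.
Qed.

Theorem lemma1 (theta phi p q : R)
  (Htheta : 0 <= theta <= 2 * PI) (Hphi : 0 <= phi <= 2 * PI)
  (Hp : 0 <= p <= 1) (Hq : 0 <= q <= 1) :
  sqrt (1 - p * q * cos (theta + phi))
    <= sqrt (1 - p * cos theta) + sqrt (1 - q * cos phi) /\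
  sqrt (1 - p * q * cos (theta - phi))
    >= sqrt (1 - p * cos theta) - sqrt (1 - q * cos phi).
Proof.
  assert (Hp' : -1 <= p <= 1) by lra.
  assert (Hq' : -1 <= q <= 1) by lra.
  set (x := sqrt (1 - p * cos theta)); set (y := sqrt (1 - q * cos phi)).
  assert (Hx2 : x ^ 2 = 1 - p * cos theta)
    by (apply pow2_sqrt, one_sub_scaled_cos_ge0, Hp').
  assert (Hy2 : y ^ 2 = 1 - q * cos phi)
    by (apply pow2_sqrt, one_sub_scaled_cos_ge0, Hq').
  assert (Hk : Rabs (p * sin theta * (q * sin phi)) <= x * y * (2 - x * y)).
  { apply abs_mul_le_of_sqr_le; try apply sqrt_pos.
    - rewrite Hx2; pose proof (scaled_sin_sqr_le p theta Hp'); nra.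
    - rewrite Hy2; pose proof (scaled_sin_sqr_le q phi Hq'); nra. }
  assert (Hplus : 1 - p * q * cos (theta + phi)
    = x ^ 2 + y ^ 2 - x ^ 2 * y ^ 2 + p * sin theta * (q * sin phi))
    by (rewrite cos_plus, Hx2, Hy2; ring).
  assert (Hminus : 1 - p * q * cos (theta - phi)
    = x ^ 2 + y ^ 2 - x ^ 2 * y ^ 2 + - (p * sin theta * (q * sin phi)))
    by (rewrite cos_minus, Hx2, Hy2; ring).
  rewrite Hplus, Hminus.
  split.
  - apply sqrt_between_sub_add; try apply sqrt_pos; exact Hk.
  - apply Rle_ge, sqrt_between_sub_add; try apply sqrt_pos.
    rewrite Rabs_Ropp; exact Hk.
Qed.
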